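(* Consider the quadratic finite-horizon dynamic multi-agent system described in the context, with constants $\gamma,\alpha,\beta,\rho>0$ such that $\|\mathbf x_i(0)\|\le\gamma$, $\|\mathbf A_i\|\le\alpha$, $\|\mathbf B_i\|\le\beta$ and $\mathbf H_i\succeq\rho\mathbf I$ for all $i\in\mathcal V$, and assume $C(t)>0$ for all $t\in\mathcal T$. Let $\lambda^\dagger>0$ and let $\delta_{\max}>0$ satisfy, for every $k\in\mathcal T$, $$\delta_{\max}\sum_{t=k+1}^{N}\Big[\gamma\,\alpha^{2t-k-1}+\beta\sum_{\substack{j=0\\ j\neq k}}^{t-1}\sqrt{\tfrac{C(j)}{\rho}}\;\alpha^{2t-j-k-2}\Big]\;\le\;\frac{\sqrt{C(k)\rho}}{n\beta}\,\lambda^\dagger .$$ Then for every choice of symmetric positive definite matrices $\mathbf Q_i,\mathbf R_i$ ($i\in\mathcal V$) with $\|\mathbf Q_i\|\le\delta_{\max}$, every competitive equilibrium $(\boldsymbol\lambda^\ast,\mathbf U^\ast,\mathbf E^\ast)$ satisfies $\lambda^\ast_t\le\lambda^\dagger$ for all $t\in\mathcal T$.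
   Context: Finite-horizon dynamic multi-agent system: $n$ agents $\mathcal V=\{1,\dots,n\}$, horizon $N\ge1$, $\mathcal T=\{0,\dots,N-1\}$. Agent $i$ has state $\mathbf x_i(t)\in\mathbb R^d$, input $\mathbf u_i(t)\in\mathbb R^m$, dynamics $\mathbf x_i(t+1)=\mathbf A_i\mathbf x_i(t)+\mathbf B_i\mathbf u_i(t)$ with given $\mathbf x_i(0)$, excess resource $a_i(t)\in\mathbb R$, and $C(t)=\sum_{i=1}^na_i(t)$. Quadratic case: agent $i$'s parameter is $\theta_i=(\mathbf Q_i,\mathbf R_i)$ with $\mathbf Q_i\in\mathbb R^{d\times d}$, $\mathbf R_i\in\mathbb R^{m\times m}$ symmetric positive definite; running utility $f(\mathbf x,\mathbf u;\theta_i)=-\mathbf x^\top\mathbf Q_i\mathbf x-\mathbf u^\top\mathbf R_i\mathbf u$; terminal utility $\phi(\mathbf x;\theta_i)=-\mathbf x^\top\mathbf Q_i\mathbf x$; consumption $h_i(\mathbf u)=\mathbf u^\top\mathbf H_i\mathbf u$ with $\mathbf H_i$ symmetric positive definite. Norms are Euclidean / induced operator norms. A competitive equilibrium is a triple $(\boldsymbol\lambda^\ast,\mathbf U^\ast,\mathbf E^\ast)$, $\boldsymbol\lambda^\ast=(\lambda^\ast_0,\dots,\lambda^\ast_{N-1})\in\mathbb R^N$, such that (i) for each $i\in\mathcal V$, $(\mathbf U_i^\ast,\mathbf E_i^\ast)=((\mathbf u_i^\ast(t))_{t\in\mathcal T},(e_i^\ast(t))_{t\in\mathcal T})$ is a maximizer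 of $\phi(\mathbf x_i(N);\theta_i)+\sum_{t=0}^{N-1}\big(f(\mathbf x_i(t),\mathbf u_i(t);\theta_i)+\lambda^\ast_t e_i(t)\big)$ over all inputs $\mathbf u_i(t)\in\mathbb R^m$ and trades $e_i(t)\in\mathbb R$ subject to the dynamics and $e_i(t)\le a_i(t)-h_i(\mathbf u_i(t))$ for all $t\in\mathcal T$; and (ii) $\sum_{i=1}^ne_i^\ast(t)=0$ for all $t\in\mathcal T$. *)

From HB Require Import structures.
From mathcomp Require Import all_boot all_order all_algebra.
From mathcomp Require Import classical_sets boolp reals.
Set Implicit Arguments.
Unset Strict Implicit.
Unset Printing Implicit Defensive.
Import Order.TTheory GRing.Theory Num.Theory.
Local Open Scope ring_scope.
Local Open Scope classical_set_scope.

Section Defs.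
Variable R : realType.

Definition vnorm (k : nat) (x : 'cV[R]_k) : R :=
  Num.sqrt (\sum_(i < k) (x i 0) ^+ 2).

Definition opnorm (p q : nat) (M : 'M[R]_(p, q)) : R :=
  sup [set vnorm (M *m x) | x in [set x : 'cV[R]_q | vnorm x <= 1]].

Definition qf (k : nat) (M : 'M[R]_k) (x : 'cV[R]_k) : R := (x^T *m M *m x) 0 0.

Definition sym_pd (k : nat) (M : 'M[R]_k) : Prop :=
  M^T = M /\ forall x : 'cV[R]_k, x != 0 -> 0 < qf M x.

Definition psd_lb (k : nat) (M : 'M[R]_k) (rho : R) : Prop :=
  forall x : 'cV[R]_k, rho * qf 1%:M x <= qf M x.

Fixpoint traj (d m : nat) (A : 'M[R]_d) (B : 'M[R]_(d, m)) (x0 : 'cV[R]_d)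
  (u : nat -> 'cV[R]_m) (t : nat) : 'cV[R]_d :=
  match t with
  | 0 => x0
  | t'.+1 => A *m traj A B x0 u t' + B *m u t'
  end.

Definition run_util (d m : nat) (Q : 'M[R]_d) (Rm : 'M[R]_m)
  (x : 'cV[R]_d) (u : 'cV[R]_m) : R := - qf Q x - qf Rm u.
Definition term_util (d : nat) (Q : 'M[R]_d) (x : 'cV[R]_d) : R := - qf Q x.

Definition agent_obj (N d m : nat) (A : 'M[R]_d) (B : 'M[R]_(d, m))
  (x0 : 'cV[R]_d) (Q : 'M[R]_d) (Rm : 'M[R]_m) (lam : nat -> R)
  (u : nat -> 'cV[R]_m) (e : nat -> R) : R :=
  term_util Q (traj A B x0 u N) +
  \sum_(0 <= t < N) (run_util Q Rm (traj A B x0 u t) (u t) + lam t * e t).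

Definition feasible (N m : nat) (H : 'M[R]_m) (a : nat -> R)
  (u : nat -> 'cV[R]_m) (e : nat -> R) : Prop :=
  forall t, (t < N)%N -> e t <= a t - qf H (u t).

(* competitive equilibrium (lam, U, E); time-indexed objects are functions on
   nat of which only the values at t in T = {0,..,N-1} matter. *)
Definition competitive_eq (n N d m : nat)
  (A : 'I_n -> 'M[R]_d) (B : 'I_n -> 'M[R]_(d, m)) (x0 : 'I_n -> 'cV[R]_d)
  (Q : 'I_n -> 'M[R]_d) (Rm : 'I_n -> 'M[R]_m) (H : 'I_n -> 'M[R]_m)
  (a : 'I_n -> nat -> R)
  (lam : nat -> R) (U : 'I_n -> nat -> 'cV[R]_m) (E : 'I_n -> nat -> R) : Prop :=
  (forall i : 'I_n,
     feasible N (H i) (a i) (U i) (E i) /\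
     forall (u : nat -> 'cV[R]_m) (e : nat -> R),
       feasible N (H i) (a i) u e ->
       agent_obj N (A i) (B i) (x0 i) (Q i) (Rm i) lam u e <=
       agent_obj N (A i) (B i) (x0 i) (Q i) (Rm i) lam (U i) (E i)) /\
  (forall t, (t < N)%N -> \sum_(i < n) E i t = 0).

End Defs.

From HB Require Import structures.
From mathcomp Require Import all_boot all_order all_algebra.
From mathcomp Require Import classical_sets boolp reals.
From mathcomp Require Import ring lra zify.
Import Order.TTheory GRing.Theory Num.Theory.
Local Open Scope ring_scope.

(* Fix a period k with lam_k > 0. Every budget then binds at time k, so by
   market clearing the consumptions h_i(u_i(k)) add up to C(k) and some agent i
   consumes at least C(k)/n; feasibility and clearing also give
   ||u_j(t)|| <= sqrt(C(t)/rho) for every agent and period. Agent i may shrink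
   u_i(k) to (1-s) u_i(k) and sell the freed resource (2s - s^2) h_i(u_i(k)) at
   price lam_k; since this never improves its plan, the first-order term in s
   gives lam_k h_i(u_i(k)) <= - sum_(t <= N) x(t)' Q_i w(t), where w is the
   response of the dynamics to the pulse u_i(k) at time k. Splitting x = y + w,
   with y the trajectory without that pulse, bounds each term by
   delta ||y(t)|| ||w(t)||, and the norm bounds on A_i, B_i, x_i(0) and the
   inputs turn the sum into the left-hand side of the condition on delta_max.
   Hence lam_k h_i(u_i(k)) <= (C(k)/n) lam_dagger <= h_i(u_i(k)) lam_dagger. *)

Set Implicit Arguments.
Unset Strict Implicit.

Section Euclid.
Variable R : realType.

Lemma cauchy_schwarz_sum (k : nat) (f g : 'I_k -> R) :
  (\sum_i f i * g i) ^+ 2 <= (\sum_i f i ^+ 2) * (\sum_i g i ^+ 2).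
Proof.
have prodE : (\sum_i f i ^+ 2) * (\sum_i g i ^+ 2) =
    \sum_i \sum_j (f i ^+ 2 * g j ^+ 2).
  by rewrite mulr_suml; apply: eq_bigr => i _; rewrite mulr_sumr.
have prodE' : (\sum_i f i ^+ 2) * (\sum_i g i ^+ 2) =
    \sum_i \sum_j (f j ^+ 2 * g i ^+ 2).
  rewrite mulrC mulr_suml; apply: eq_bigr => i _; rewrite mulr_sumr.
  by apply: eq_bigr => j _; rewrite mulrC.
have sqrE : (\sum_i f i * g i) ^+ 2 = \sum_i \sum_j (f i * g i * (f j * g j)).
  by rewrite expr2 mulr_suml; apply: eq_bigr => i _; rewrite mulr_sumr.
have lagrange : \sum_i \sum_j (f i * g j - f j * g i) ^+ 2 =
    \sum_i \sum_j (f i ^+ 2 * g j ^+ 2) + \sum_i \sum_j (f j ^+ 2 * g i ^+ 2)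
    - 2 * \sum_i \sum_j (f i * g i * (f j * g j)).
  rewrite mulr_sumr -big_split -sumrB /=; apply: eq_bigr => i _.
  rewrite mulr_sumr -big_split -sumrB /=; apply: eq_bigr => j _.
  ring.
have : 0 <= \sum_i \sum_j (f i * g j - f j * g i) ^+ 2.
  by apply: sumr_ge0 => i _; apply: sumr_ge0 => j _; apply: sqr_ge0.
rewrite lagrange -prodE -prodE' -sqrE; lra.
Qed.

Definition dot (k : nat) (x y : 'cV[R]_k) : R := \sum_i x i 0 * y i 0.

Section Dot.
Variable k : nat.
Implicit Types x y z : 'cV[R]_k.

Lemma dotC x y : dot x y = dot y x.
Proof. by apply: eq_bigr => i _; rewrite mulrC. Qed.

Lemma dotDl x y z : dot (x + y) z = dot x z + dot y z.
Proof. by rewrite /dot -big_split; apply: eq_bigr => i _; rewrite !mxE mulrDl. Qed.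

Lemma dotDr x y z : dot z (x + y) = dot z x + dot z y.
Proof. by rewrite dotC dotDl !(dotC z). Qed.

Lemma dotZl c x y : dot (c *: x) y = c * dot x y.
Proof. by rewrite /dot mulr_sumr; apply: eq_bigr => i _; rewrite !mxE mulrA. Qed.

Lemma dotZr c x y : dot y (c *: x) = c * dot y x.
Proof. by rewrite dotC dotZl dotC. Qed.

Lemma dot0r y : dot y 0 = 0.
Proof. by rewrite /dot big1 // => i _; rewrite mxE mulr0. Qed.

Lemma dot_trmx x y : dot x y = (x^T *m y) 0 0.
Proof. by rewrite mxE; apply: eq_bigr => i _; rewrite mxE. Qed.

Lemma dotxx_ge0 x : 0 <= dot x x.
Proof. by apply: sumr_ge0 => i _; rewrite -expr2 sqr_ge0. Qed.

Lemma vnormE x : vnorm x = Num.sqrt (dot x x).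
Proof. by congr Num.sqrt; apply: eq_bigr => i _; rewrite expr2. Qed.

Lemma vnorm_ge0 x : 0 <= vnorm x.
Proof. exact: sqrtr_ge0. Qed.

Lemma vnorm_sqr x : vnorm x ^+ 2 = dot x x.
Proof. by rewrite vnormE sqr_sqrtr // dotxx_ge0. Qed.

Lemma dot_le_vnorm x y : `|dot x y| <= vnorm x * vnorm y.
Proof.
rewrite !vnormE -sqrtrM ?dotxx_ge0 // -sqrtr_sqr ler_wsqrtr //.
have := cauchy_schwarz_sum (fun i => x i 0) (fun i => y i 0).
by rewrite /dot; congr (_ <= _ * _); apply: eq_bigr => i _; rewrite expr2.
Qed.

Lemma vnormD x y : vnorm (x + y) <= vnorm x + vnorm y.
Proof.
rewrite (vnormE (x + y)) -(@ger0_norm _ (vnorm x + vnorm y)); last first.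
  by rewrite addr_ge0 ?vnorm_ge0.
rewrite -sqrtr_sqr ler_wsqrtr // dotDl !dotDr (dotC y x).
have := le_trans (ler_norm _) (dot_le_vnorm x y).
rewrite -!vnorm_sqr; nra.
Qed.

Lemma vnormZ c x : vnorm (c *: x) = `|c| * vnorm x.
Proof. by rewrite !vnormE dotZl dotZr mulrA -expr2 sqrtrM ?sqr_ge0 // sqrtr_sqr. Qed.

Lemma vnorm0 : vnorm (0 : 'cV[R]_k) = 0.
Proof. by rewrite vnormE dot0r sqrtr0. Qed.

Lemma vnorm_eq0 x : vnorm x = 0 -> x = 0.
Proof.
rewrite vnormE => /eqP; rewrite sqrtr_eq0 => xx_le0.
have xx0 : \sum_i x i 0 * x i 0 = 0.
  by apply/eqP; rewrite eq_le xx_le0 dotxx_ge0.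
have xixi_ge0 (i : 'I_k) : true -> 0 <= x i 0 * x i 0 by rewrite -expr2 sqr_ge0.
apply/matrixP => i j; rewrite !mxE (ord1 j).
by have /eqP := psumr_eq0P xixi_ge0 xx0 (i := i) isT; rewrite mulf_eq0 orbb => /eqP.
Qed.

End Dot.

Lemma vnorm_mulmx_le_frobenius p k (M : 'M[R]_(p, k)) (x : 'cV[R]_k) :
  vnorm (M *m x) <= Num.sqrt (\sum_i \sum_j M i j ^+ 2) * vnorm x.
Proof.
rewrite /vnorm -sqrtrM; last first.
  by apply: sumr_ge0 => i _; apply: sumr_ge0 => j _; apply: sqr_ge0.
rewrite ler_wsqrtr // mulr_suml; apply: ler_sum => i _.
by rewrite mxE; apply: cauchy_schwarz_sum.
Qed.

Lemma vnorm_mulmx_le p k (M : 'M[R]_(p, k)) (x : 'cV[R]_k) :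
  vnorm (M *m x) <= opnorm M * vnorm x.
Proof.
have ub : has_ubound [set vnorm (M *m y) | y in [set y : 'cV[R]_k | vnorm y <= 1]].
  exists (Num.sqrt (\sum_i \sum_j M i j ^+ 2)) => r [y /= y_le1 <-].
  apply: le_trans (vnorm_mulmx_le_frobenius M y) _.
  by rewrite ler_piMr // sqrtr_ge0.
have [x0|xn0] := eqVneq (vnorm x) 0.
  by rewrite (vnorm_eq0 x0) mulmx0 !vnorm0 mulr0.
have xp : 0 < vnorm x by rewrite lt_neqAle eq_sym xn0 vnorm_ge0.
have : vnorm (M *m ((vnorm x)^-1 *: x)) <= opnorm M.
  apply: (ub_le_sup ub); exists ((vnorm x)^-1 *: x) => //=.
  by rewrite vnormZ ger0_norm ?invr_ge0 ?vnorm_ge0 // mulVf // gt_eqF.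
rewrite -scalemxAr vnormZ ger0_norm ?invr_ge0 ?vnorm_ge0 // => h.
by rewrite -ler_pdivrMr // mulrC.
Qed.

End Euclid.

Section QuadraticForm.
Variables (R : realType) (k : nat).
Implicit Types (M : 'M[R]_k) (x y w : 'cV[R]_k).

Lemma qfE M x : qf M x = dot x (M *m x).
Proof. by rewrite /qf dot_trmx mulmxA. Qed.

Lemma dot_mulmx_sym M x y : M^T = M -> dot x (M *m y) = dot y (M *m x).
Proof.
move=> symM; rewrite !dot_trmx.
transitivity ((x^T *m (M *m y))^T 0 0); first by rewrite [RHS]mxE.
by rewrite !trmx_mul !trmxK symM mulmxA.
Qed.

Lemma qf_ge0 M x : sym_pd M -> 0 <= qf M x.
Proof.
move=> [_ pdM]; have [->|xn0] := eqVneq x 0; last exact: ltW (pdM _ xn0).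
by rewrite qfE mulmx0 dot0r.
Qed.

Lemma qfZ M c x : qf M (c *: x) = c ^+ 2 * qf M x.
Proof. by rewrite !qfE -scalemxAr dotZl dotZr mulrA -expr2. Qed.

Lemma qfDZ M c x w : M^T = M ->
  qf M (x + c *: w) = qf M x + 2 * c * dot x (M *m w) + c ^+ 2 * qf M w.
Proof.
move=> symM; rewrite !qfE mulmxDr -scalemxAr dotDl !dotDr !dotZl !dotZr.
rewrite (dot_mulmx_sym w x symM); ring.
Qed.

(* Dropping -w'Mw <= 0 leaves the cross term -y'Mw, bounded by Cauchy-Schwarz. *)
Lemma oppr_dot_addl_le M delta y w : sym_pd M -> opnorm M <= delta ->
  - dot (y + w) (M *m w) <= vnorm y * delta * vnorm w.
Proof.
move=> pdM M_le; rewrite dotDl -qfE.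
have := qf_ge0 w pdM.
have Mw_le : vnorm (M *m w) <= delta * vnorm w.
  exact: le_trans (vnorm_mulmx_le M w) (ler_wpM2r (vnorm_ge0 w) M_le).
have : - dot y (M *m w) <= vnorm y * vnorm (M *m w).
  by apply: le_trans (dot_le_vnorm y (M *m w)); rewrite -normrN ler_norm.
have := ler_wpM2l (vnorm_ge0 y) Mw_le.
rewrite mulrA; lra.
Qed.

End QuadraticForm.

Definition pulse (V : nmodType) (k : nat) (v : V) (t : nat) : V :=
  if t == k then v else 0.

Lemma sum_pulse (V : nmodType) (k : nat) (v : V) (t : nat) :
  \sum_(0 <= j < t) pulse k v j = if (k < t)%N then v else 0.
Proof.
elim: t => [|t IH]; first by rewrite big_geq.
rewrite big_nat_recr //= IH /pulse ltnS.
by case: ltngtP; rewrite ?addr0 ?add0r.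
Qed.

Section Trajectory.
Variables (R : realType) (d m : nat) (A : 'M[R]_d) (B : 'M[R]_(d, m)).
Implicit Types (u v : nat -> 'cV[R]_m).

Lemma traj_superposition (x0 : 'cV[R]_d) u v (c : R) u' :
  (forall t, u' t = u t + c *: v t) ->
  forall t, traj A B x0 u' t = traj A B x0 u t + c *: traj A B 0 v t.
Proof.
move=> u'E; elim => [|t IH] /=; first by rewrite scaler0 addr0.
rewrite IH u'E scalerDr !mulmxDr -!scalemxAr.
by rewrite -!addrA; congr (_ + _); rewrite addrCA.
Qed.

Lemma traj0_input0 v t : (forall j, (j < t)%N -> v j = 0) -> traj A B 0 v t = 0.
Proof.
elim: t => [//|t IH] v0 /=.
by rewrite IH ?v0 ?mulmx0 ?addr0 // => j /ltnW; apply: v0.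
Qed.

Lemma vnorm_traj_le (x0 : 'cV[R]_d) u (alpha beta : R) t :
  0 <= alpha -> opnorm A <= alpha -> opnorm B <= beta ->
  vnorm (traj A B x0 u t) <=
    alpha ^+ t * vnorm x0 + \sum_(0 <= j < t) alpha ^+ (t - 1 - j) * beta * vnorm (u j).
Proof.
move=> a0 A_le B_le; elim: t => [|t IH] /=.
  by rewrite big_geq // expr0 mul1r addr0.
apply: le_trans (vnormD _ _) _.
have Ax_le : vnorm (A *m traj A B x0 u t) <= alpha * vnorm (traj A B x0 u t).
  exact: le_trans (vnorm_mulmx_le _ _) (ler_wpM2r (vnorm_ge0 _) A_le).
have Bu_le : vnorm (B *m u t) <= beta * vnorm (u t).
  exact: le_trans (vnorm_mulmx_le _ _) (ler_wpM2r (vnorm_ge0 _) B_le).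
rewrite big_nat_recr //= subn1 /= subnn expr0 mul1r.
have -> : \sum_(0 <= j < t) alpha ^+ (t - j) * beta * vnorm (u j) =
    alpha * \sum_(0 <= j < t) alpha ^+ (t - 1 - j) * beta * vnorm (u j).
  rewrite mulr_sumr; apply: eq_big_nat => j /andP [_ jt].
  by rewrite !mulrA -exprS; congr (_ ^+ _ * _ * _); lia.
have := ler_wpM2l a0 IH.
rewrite exprS; nra.
Qed.

Lemma vnorm_traj_pulse_le k (v : 'cV[R]_m) (alpha beta : R) t :
  0 <= alpha -> opnorm A <= alpha -> opnorm B <= beta -> (k < t)%N ->
  vnorm (traj A B 0 (pulse k v) t) <= alpha ^+ (t - 1 - k) * beta * vnorm v.
Proof.
move=> a0 A_le B_le kt; apply: le_trans (vnorm_traj_le 0 _ _ a0 A_le B_le) _.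
rewrite vnorm0 mulr0 add0r.
rewrite (eq_bigr (pulse k (alpha ^+ (t - 1 - k) * beta * vnorm v))) ?sum_pulse ?kt //.
by move=> j _; rewrite /pulse; case: eqP => [->|_]; rewrite ?vnorm0 ?mulr0.
Qed.

Lemma vnorm_traj_skip_le (x0 : 'cV[R]_d) u k (s : nat -> R) (alpha beta gamma : R) t :
  0 <= alpha -> 0 <= beta -> opnorm A <= alpha -> opnorm B <= beta ->
  vnorm x0 <= gamma -> (forall j, (j < t)%N -> vnorm (u j) <= s j) ->
  vnorm (traj A B x0 (fun j => if j == k then 0 else u j) t) <=
    alpha ^+ t * gamma + \sum_(0 <= j < t | j != k) alpha ^+ (t - 1 - j) * beta * s j.
Proof.
move=> a0 b0 A_le B_le x0_le u_le.
apply: le_trans (vnorm_traj_le _ _ _ a0 A_le B_le) _.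
apply: lerD; first by apply: ler_wpM2l => //; apply: exprn_ge0.
rewrite [X in _ <= X]big_mkcond /=; apply: ler_sum_nat => j /andP [_ jt].
have [->|_] := eqVneq j k; first by rewrite vnorm0 mulr0.
by apply: ler_wpM2l (u_le j jt); apply: mulr_ge0 (exprn_ge0 _ a0) b0.
Qed.

End Trajectory.

Lemma traj_bound_mul_pulse_gain (R : realType) (alpha beta gamma : R) (s : nat -> R) k t :
  (k < t)%N ->
  (alpha ^+ t * gamma + \sum_(0 <= j < t | j != k) alpha ^+ (t - 1 - j) * beta * s j)
    * alpha ^+ (t - 1 - k) =
  gamma * alpha ^+ (2 * t - k - 1) +
    beta * \sum_(0 <= j < t | j != k) s j * alpha ^+ (2 * t - j - k - 2).
Proof.
move=> kt; rewrite mulrDl mulr_suml mulr_sumr; congr (_ + _).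
  by rewrite mulrAC -exprD mulrC; congr (_ * _ ^+ _); clear -kt; lia.
rewrite big_nat_cond [RHS]big_nat_cond; apply: eq_bigr => j /andP [/andP [_ jt] _].
have -> : alpha ^+ (2 * t - j - k - 2) = alpha ^+ (t - 1 - j) * alpha ^+ (t - 1 - k).
  by rewrite -exprD; congr (_ ^+ _); clear -jt kt; lia.
by move: (alpha ^+ _) (alpha ^+ _) => p q; ring.
Qed.

Section PulseResponse.
Variables (R : realType) (N d m : nat) (A : 'M[R]_d) (B : 'M[R]_(d, m)) (Q : 'M[R]_d).
Variables (x0 : 'cV[R]_d) (u : nat -> 'cV[R]_m) (k : nat).
Variables (s : nat -> R) (alpha beta gamma delta : R).
Hypotheses (alpha_ge0 : 0 <= alpha) (beta_ge0 : 0 <= beta) (delta_ge0 : 0 <= delta).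
Hypotheses (A_le : opnorm A <= alpha) (B_le : opnorm B <= beta).
Hypotheses (x0_le : vnorm x0 <= gamma) (u_le : forall j, (j < N)%N -> vnorm (u j) <= s j).
Hypotheses (pdQ : sym_pd Q) (Q_le : opnorm Q <= delta).

Local Notation x := (traj A B x0 u).
Local Notation w := (traj A B 0 (pulse k (u k))).

Lemma oppr_dot_traj_pulse_le t : (k < t)%N -> (t <= N)%N ->
  - dot (x t) (Q *m w t) <= delta * beta * s k *
    (gamma * alpha ^+ (2 * t - k - 1) +
       beta * \sum_(0 <= j < t | j != k) s j * alpha ^+ (2 * t - j - k - 2)).
Proof.
move=> kt tN.
pose y := traj A B x0 (fun j => if j == k then 0 else u j).
have x_split : x t = y t + w t.
  rewrite (traj_superposition A B x0 (u := fun j => if j == k then 0 else u j)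
    (v := pulse k (u k)) (c := 1)) ?scale1r // => j.
  by rewrite scale1r /pulse; case: eqP => [->|_]; rewrite ?add0r ?addr0.
have y_le := vnorm_traj_skip_le k (t := t) alpha_ge0 beta_ge0 A_le B_le x0_le
  (fun j jt => u_le (leq_trans jt tN)).
have w_le : vnorm (w t) <= alpha ^+ (t - 1 - k) * beta * s k.
  apply: le_trans (vnorm_traj_pulse_le (u k) alpha_ge0 A_le B_le kt) _.
  apply: ler_wpM2l; first exact: mulr_ge0 (exprn_ge0 _ alpha_ge0) beta_ge0.
  exact: u_le (leq_trans kt tN).
rewrite x_split -traj_bound_mul_pulse_gain //.
apply: le_trans (oppr_dot_addl_le _ _ pdQ Q_le) _.
set Y := _ + _ in y_le *.
rewrite [X in _ <= X](_ : _ = Y * delta * (alpha ^+ (t - 1 - k) * beta * s k));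
  last by ring.
apply: ler_pM => //; first exact: mulr_ge0 (vnorm_ge0 _) delta_ge0.
  exact: vnorm_ge0.
by rewrite /y ler_wpM2r.
Qed.

Lemma sum_oppr_dot_traj_pulse_le : (k < N)%N ->
  \sum_(0 <= t < N.+1) - dot (x t) (Q *m w t) <= delta * beta * s k *
    \sum_(k.+1 <= t < N.+1)
      (gamma * alpha ^+ (2 * t - k - 1) +
         beta * \sum_(0 <= j < t | j != k) s j * alpha ^+ (2 * t - j - k - 2)).
Proof.
move=> kN; rewrite (big_cat_nat (n := k.+1)) //=; last exact: ltnW.
rewrite big1_seq ?add0r => [|t]; last first.
  rewrite mem_index_iota => /andP [_ tk].
  rewrite traj0_input0 ?mulmx0 ?dot0r ?oppr0 // => j jt.
  by rewrite /pulse ltn_eqF // (leq_trans jt).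
rewrite mulr_sumr; apply: ler_sum_nat => t /andP [kt tN].
exact: oppr_dot_traj_pulse_le.
Qed.

End PulseResponse.

Lemma le0_of_quadratic_perturbation (R : realFieldType) (L M : R) :
  (forall s, 0 < s -> 2 * s * L - s ^+ 2 * M <= 0) -> L <= 0.
Proof.
move=> perturb; rewrite leNgt; apply/negP => L_gt0.
have M_gt0 : 0 < M by have := perturb 1 ltr01; lra.
(* the optimal step s = L / M would gain L^2 / M > 0 *)
have := perturb (L / M) (divr_gt0 L_gt0 M_gt0).
have -> : 2 * (L / M) * L - (L / M) ^+ 2 * M = L * L / M by field; rewrite gt_eqF.
by rewrite leNgt divr_gt0 // mulr_gt0.
Qed.

Section AgentOptimality.
Variables (R : realType) (N d m : nat).
Variables (A : 'M[R]_d) (B : 'M[R]_(d, m)) (x0 : 'cV[R]_d).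
Variables (Q : 'M[R]_d) (Rm H : 'M[R]_m) (a lam : nat -> R).

Definition agent_optimal (u : nat -> 'cV[R]_m) (e : nat -> R) : Prop :=
  feasible N H a u e /\
  forall u' e', feasible N H a u' e' ->
    agent_obj N A B x0 Q Rm lam u' e' <= agent_obj N A B x0 Q Rm lam u e.

Lemma agent_obj_trade_pulse u e k c : (k < N)%N ->
  agent_obj N A B x0 Q Rm lam u (fun t => e t + pulse k c t) =
  agent_obj N A B x0 Q Rm lam u e + lam k * c.
Proof.
move=> kN; rewrite /agent_obj -addrA; congr (_ + _).
have := sum_pulse k (lam k * c) N; rewrite kN => <-; rewrite -big_split /=.
apply: eq_bigr => t _; rewrite /pulse mulrDr.
by case: eqP => [->|_]; rewrite ?mulr0 ?addr0 // addrA.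
Qed.

Lemma agent_obj_perturb u e v c (s : R) : Q^T = Q -> Rm^T = Rm ->
  let x := traj A B x0 u in let w := traj A B 0 v in
  agent_obj N A B x0 Q Rm lam (fun t => u t + (- s) *: v t)
    (fun t => e t + (2 * s - s ^+ 2) * c t) - agent_obj N A B x0 Q Rm lam u e =
  2 * s * (\sum_(0 <= t < N)
             (dot (x t) (Q *m w t) + dot (u t) (Rm *m v t) + lam t * c t)
           + dot (x N) (Q *m w N))
  - s ^+ 2 * (\sum_(0 <= t < N) (qf Q (w t) + qf Rm (v t) + lam t * c t) + qf Q (w N)).
Proof.
move=> symQ symRm x w.
have xE := traj_superposition A B x0 (u' := fun t => u t + (- s) *: v t)
  (fun t => erefl).
rewrite /agent_obj /term_util /run_util xE qfDZ //.
rewrite (_ : forall p q r z : R, p + q - (r + z) = (p - r) + (q - z));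
  last by move=> *; ring.
rewrite -sumrB (eq_bigr (fun t => 2 * s * (dot (x t) (Q *m w t) + dot (u t) (Rm *m v t)
    + lam t * c t) - s ^+ 2 * (qf Q (w t) + qf Rm (v t) + lam t * c t))); last first.
  by move=> t _; rewrite xE !qfDZ // /x /w; ring.
by rewrite sumrB -!mulr_sumr /x /w; ring.
Qed.

Section Optimal.
Variables (u : nat -> 'cV[R]_m) (e : nat -> R).
Hypothesis opt : agent_optimal u e.

Lemma optimal_budget_binds k : (k < N)%N -> 0 < lam k -> e k = a k - qf H (u k).
Proof.
move=> kN lam_gt0; have [feas better] := opt.
apply/eqP; rewrite eq_le feas //= leNgt; apply/negP => slack.
pose c := a k - qf H (u k) - e k.
have feas' : feasible N H a u (fun t => e t + pulse k c t).
  move=> t tN; rewrite /pulse; case: eqP => [->|_]; first by rewrite /c; lra.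
  by rewrite addr0; apply: feas.
have := better _ _ feas'; rewrite agent_obj_trade_pulse //.
have : 0 < lam k * c by rewrite mulr_gt0 // subr_gt0.
lra.
Qed.

Lemma optimal_first_order k : sym_pd Q -> sym_pd Rm -> (k < N)%N ->
  lam k * qf H (u k) <=
  \sum_(0 <= t < N.+1) - dot (traj A B x0 u t) (Q *m traj A B 0 (pulse k (u k)) t).
Proof.
move=> [symQ _] pdRm kN; have [feas better] := opt.
set q := qf H (u k); set v := pulse k (u k); set c := pulse k q.
set x := traj A B x0 u; set w := traj A B 0 v.
have L_le0 : \sum_(0 <= t < N) (dot (x t) (Q *m w t) + dot (u t) (Rm *m v t) + lam t * c t)
    + dot (x N) (Q *m w N) <= 0.
  apply: le0_of_quadratic_perturbation => s s_gt0.
  have feas' : feasible N H a (fun t => u t + (- s) *: v t)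
      (fun t => e t + (2 * s - s ^+ 2) * c t).
    move=> t tN; rewrite /v /c /pulse; case: eqP => [->|_]; last first.
      by rewrite scaler0 mulr0 !addr0; apply: feas.
    rewrite -{1}(scale1r (u k)) -scalerDl qfZ -/q.
    have -> : (1 + - s) ^+ 2 * q = q - (2 * s - s ^+ 2) * q by ring.
    by have := feas k kN; rewrite -/q; lra.
  have := agent_obj_perturb u e v c s symQ pdRm.1; rewrite /= -/x -/w => obj_diff.
  by have := better _ _ feas'; rewrite -subr_le0 obj_diff => ineq; apply: ineq.
have uRv_ge0 : 0 <= \sum_(0 <= t < N) dot (u t) (Rm *m v t).
  apply: sumr_ge0 => t _; rewrite /v /pulse; case: eqP => [->|_].
    by rewrite -qfE; apply: qf_ge0.
  by rewrite mulmx0 dot0r.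
have lam_c : \sum_(0 <= t < N) lam t * c t = lam k * q.
  rewrite (eq_bigr (pulse k (lam k * q))) ?sum_pulse ?kN //.
  by move=> t _; rewrite /c /pulse; case: eqP => [->|_]; rewrite ?mulr0.
move: L_le0; rewrite !big_split /= lam_c big_nat_recr //= sumrN; lra.
Qed.

End Optimal.

End AgentOptimality.

Lemma exists_ge_mean (R : realFieldType) (n : nat) (f : 'I_n -> R) : (0 < n)%N ->
  exists i, (\sum_j f j) / n%:R <= f i.
Proof.
move=> n_gt0; apply/not_existsP => below.
have : \sum_j f j < \sum_(j < n) (\sum_j f j) / n%:R.
  apply: ltr_sum; first by apply/hasP; exists (Ordinal n_gt0); rewrite ?mem_index_enum.
  by move=> j _; rewrite ltNge; apply/negP => /(below j).
by rewrite sumr_const card_ord -[X in _ < X]mulr_natr divfK ?ltxx // pnatr_eq0 -lt0n.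
Qed.

Lemma sqrt_div_mul_sqrt_mul (R : rcfType) (c r : R) : 0 <= c -> 0 < r ->
  Num.sqrt (c / r) * Num.sqrt (c * r) = c.
Proof.
move=> c_ge0 r_gt0; rewrite -sqrtrM; last exact: divr_ge0 c_ge0 (ltW r_gt0).
have -> : c / r * (c * r) = c ^+ 2 by field; rewrite gt_eqF.
by rewrite sqrtr_sqr ger0_norm.
Qed.

Section Equilibrium.
Variables (R : realType) (n N d m : nat).
Variables (A : 'I_n -> 'M[R]_d) (B : 'I_n -> 'M[R]_(d, m)) (x0 : 'I_n -> 'cV[R]_d).
Variables (Q : 'I_n -> 'M[R]_d) (Rm H : 'I_n -> 'M[R]_m) (a : 'I_n -> nat -> R).
Variables (lam : nat -> R) (U : 'I_n -> nat -> 'cV[R]_m) (E : 'I_n -> nat -> R).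
Hypothesis pdH : forall i, sym_pd (H i).
Hypothesis equilibrium : competitive_eq N A B x0 Q Rm H a lam U E.

Lemma equilibrium_optimal i :
  agent_optimal N (A i) (B i) (x0 i) (Q i) (Rm i) (H i) (a i) lam (U i) (E i).
Proof. exact: equilibrium.1. Qed.

Lemma equilibrium_consumption_le i t : (t < N)%N -> qf (H i) (U i t) <= \sum_j a j t.
Proof.
move=> tN.
have total : \sum_j qf (H j) (U j t) <= \sum_j a j t.
  apply: le_trans (_ : _ <= \sum_j (a j t - E j t)) _.
    by apply: ler_sum => j _; have := (equilibrium_optimal j).1 t tN; lra.
  by rewrite sumrB equilibrium.2 // subr0.
apply: le_trans total; rewrite (bigD1 i) //= lerDl.
by apply: sumr_ge0 => j _; apply: qf_ge0.
Qed.

Lemma vnorm_equilibrium_input_le (rho : R) i t :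
  0 < rho -> psd_lb (H i) rho -> (t < N)%N ->
  vnorm (U i t) <= Num.sqrt ((\sum_j a j t) / rho).
Proof.
move=> rho_gt0 H_ge tN; rewrite vnormE ler_wsqrtr // ler_pdivlMr //.
have := H_ge (U i t); rewrite qfE mul1mx.
by have := equilibrium_consumption_le i tN; lra.
Qed.

Lemma equilibrium_consumption_sum k : (k < N)%N -> 0 < lam k ->
  \sum_i qf (H i) (U i k) = \sum_i a i k.
Proof.
move=> kN lam_gt0; have := equilibrium.2 k kN.
rewrite (eq_bigr (fun i => a i k - qf (H i) (U i k))) => [|i _]; last first.
  exact: (optimal_budget_binds (equilibrium_optimal i) kN lam_gt0).
by rewrite sumrB => /eqP; rewrite subr_eq0 eq_sym => /eqP.
Qed.

Lemma equilibrium_large_consumer k : (k < N)%N -> 0 < lam k -> 0 < \sum_i a i k ->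
  exists i, (\sum_j a j k) / n%:R <= qf (H i) (U i k).
Proof.
move=> kN lam_gt0 C_gt0; rewrite -equilibrium_consumption_sum //.
apply: exists_ge_mean; rewrite lt0n; apply/eqP => n0.
by move: C_gt0; rewrite big1 ?ltxx // => i _; have := ltn_ord i; rewrite {2}n0.
Qed.

End Equilibrium.

Unset Implicit Arguments.
Set Strict Implicit.

Theorem theorem2 (R : realType) (n N d m : nat)
  (A : 'I_n -> 'M[R]_d) (B : 'I_n -> 'M[R]_(d, m)) (x0 : 'I_n -> 'cV[R]_d)
  (H : 'I_n -> 'M[R]_m) (a : 'I_n -> nat -> R)
  (gamma alpha beta rho lamd deltamax : R) :
  (0 < N)%N ->
  0 < gamma -> 0 < alpha -> 0 < beta -> 0 < rho ->
  (forall i, vnorm (x0 i) <= gamma) ->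
  (forall i, opnorm (A i) <= alpha) ->
  (forall i, opnorm (B i) <= beta) ->
  (forall i, sym_pd (H i)) ->
  (forall i, psd_lb (H i) rho) ->
  (forall t, (t < N)%N -> 0 < \sum_(i < n) a i t) ->
  0 < lamd -> 0 < deltamax ->
  (forall k, (k < N)%N ->
     deltamax *
       \sum_(k.+1 <= t < N.+1)
         (gamma * alpha ^+ (2 * t - k - 1) +
          beta * \sum_(0 <= j < t | j != k)
                   Num.sqrt ((\sum_(i < n) a i j) / rho) *
                   alpha ^+ (2 * t - j - k - 2))
     <= Num.sqrt ((\sum_(i < n) a i k) * rho) / (n%:R * beta) * lamd) ->
  forall (Q : 'I_n -> 'M[R]_d) (Rm : 'I_n -> 'M[R]_m),
    (forall i, sym_pd (Q i)) -> (forall i, sym_pd (Rm i)) ->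
    (forall i, opnorm (Q i) <= deltamax) ->
  forall (lam : nat -> R) (U : 'I_n -> nat -> 'cV[R]_m) (E : 'I_n -> nat -> R),
    competitive_eq N A B x0 Q Rm H a lam U E ->
    forall t, (t < N)%N -> lam t <= lamd.
Proof.
move=> _ _ alpha_gt0 beta_gt0 rho_gt0 x0_le A_le B_le pdH H_ge C_gt0 lamd_gt0
  delta_gt0 delta_small Q Rm pdQ pdRm Q_le lam U E equilibrium k kN.
have [lam_le0|lam_gt0] := lerP (lam k) 0; first exact: le_trans lam_le0 (ltW lamd_gt0).
pose C j := \sum_(i < n) a i j.
have [i Ci_le] := equilibrium_large_consumer equilibrium kN lam_gt0 (C_gt0 k kN).
have n_gt0 : (0 < n)%N := leq_ltn_trans (leq0n i) (ltn_ord i).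
have Cn_gt0 : 0 < C k / n%:R by rewrite divr_gt0 ?ltr0n ?C_gt0.
have first_order := optimal_first_order (equilibrium_optimal equilibrium i)
  (pdQ i) (pdRm i) kN.
have response := sum_oppr_dot_traj_pulse_le (ltW alpha_gt0) (ltW beta_gt0)
  (ltW delta_gt0) (A_le i) (B_le i) (x0_le i)
  (fun j jN => vnorm_equilibrium_input_le pdH equilibrium rho_gt0 (H_ge i) jN)
  (pdQ i) (Q_le i) kN.
have price_bound : lam k * qf (H i) (U i k) <= C k / n%:R * lamd.
  apply: le_trans first_order (le_trans response _).
  set S := \sum_(k.+1 <= t < N.+1) _; set sk := Num.sqrt (C k / rho).
  have := ler_wpM2l (mulr_ge0 (ltW beta_gt0) (sqrtr_ge0 (C k / rho))) (delta_small k kN).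
  rewrite -/S -/sk.
  have sqrt_Ck : sk * Num.sqrt (C k * rho) = C k :=
    sqrt_div_mul_sqrt_mul (ltW (C_gt0 k kN)) rho_gt0.
  have -> : beta * sk * (Num.sqrt (C k * rho) / (n%:R * beta) * lamd) = C k / n%:R * lamd.
    by rewrite -[in RHS]sqrt_Ck; field; rewrite pnatr_eq0 -lt0n n_gt0 gt_eqF.
  lra.
rewrite -(ler_pM2r (lt_le_trans Cn_gt0 Ci_le)); apply: le_trans price_bound _.
by rewrite [_ * lamd]mulrC ler_pM2l.
Qed.
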